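(* If for some $1\leq n<\omega$ the property $\mathrm{Gal}(\mathrm{Cub}_{\aleph_m},\aleph_m,2^{\aleph_m})$ fails for all $m\in[n,\omega)$, then $2^{\aleph_n}>\aleph_\omega$. In particular, $\aleph_\omega$ is not a strong limit cardinal.
   Context: $\mathrm{Cub}_\mu$ is the club filter on $\mu$. For a regular uncountable cardinal $\mu$, a cardinal $\lambda$ and a filter $\mathscr{F}$ over $\mu$, $\mathrm{Gal}(\mathscr{F},\mu,\lambda)$ means: every sequence $\langle A_\alpha\mid \alpha<\lambda\rangle$ of members of $\mathscr{F}$ has a set of indices $I\subseteq\lambda$ with $|I|=\mu$ and $\bigcap_{\alpha\in I}A_\alpha\in\mathscr{F}$. *)

(* plain Rocq type theory with classical axioms available.
   Cardinals are represented by types; |A| <= |B| is "A injects into B". *)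

Definition inj_into (A B : Type) : Prop :=
  exists f : A -> B, forall x y, f x = f y -> x = y.

Definition equipotent (A B : Type) : Prop :=
  exists f : A -> B, (forall x y, f x = f y -> x = y) /\ (forall b, exists a, f a = b).

Definition sub {T : Type} (P : T -> Prop) : Type := { x : T | P x }.

Definition strict_wellorder {T : Type} (lt : T -> T -> Prop) : Prop :=
  (forall x y z, lt x y -> lt y z -> lt x z) /\
  (forall x y, lt x y \/ x = y \/ lt y x) /\
  well_founded lt.

(* (T, lt) is an initial ordinal of cardinality aleph_{m+1}, given that
   (S) has cardinality aleph_m: T does not inject into S, but every proper
   initial segment of T does.  This pins down the order type omega_{m+1}. *)
Definition is_successor_initial_ordinal (S T : Type) (lt : T -> T -> Prop) : Prop :=
  strict_wellorder lt /\
  ~ inj_into T S /\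
  (forall x : T, inj_into (sub (fun y => lt y x)) S).

(* A family (Aleph m, lt m) of well-ordered types such that Aleph m is the
   initial ordinal omega_m (m >= 1), and Aleph 0 is countably infinite. *)
Definition aleph_family (Aleph : nat -> Type)
    (lt : forall m, Aleph m -> Aleph m -> Prop) : Prop :=
  equipotent (Aleph 0) nat /\
  (forall m, is_successor_initial_ordinal (Aleph m) (Aleph (S m)) (lt (S m))).

Definition unbounded {T : Type} (lt : T -> T -> Prop) (C : T -> Prop) : Prop :=
  forall x, exists y, C y /\ lt x y.

Definition closed {T : Type} (lt : T -> T -> Prop) (C : T -> Prop) : Prop :=
  forall x, (exists y, lt y x) ->
    (forall y, lt y x -> exists z, C z /\ lt y z /\ lt z x) -> C x.

Definition club {T : Type} (lt : T -> T -> Prop) (C : T -> Prop) : Prop :=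
  closed lt C /\ unbounded lt C.

Definition in_Cub {T : Type} (lt : T -> T -> Prop) (A : T -> Prop) : Prop :=
  exists C, club lt C /\ (forall x, C x -> A x).

(* Gal(F, mu, lambda) for a filter F on the type M (of cardinality mu),
   with lambda the cardinality of the index type L: every L-indexed family
   of members of F has a subfamily indexed by I with |I| = mu whose
   intersection is in F. *)
Definition Gal {M : Type} (F : (M -> Prop) -> Prop) (L : Type) : Prop :=
  forall A : L -> (M -> Prop), (forall i, F (A i)) ->
    exists I : L -> Prop, equipotent (sub I) M /\
      F (fun x => forall i, I i -> A i x).

From Stdlib Require Import Classical ClassicalEpsilon FunctionalExtensionality
  PropExtensionality ProofIrrelevance Wellfounded Lia Cantor.

(** The key step is that the failure of Gal(Cub_{κ^+}, κ^+, λ) forces λ ≤ 2^κ.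
    Shrink the given sets to clubs C_a.  If for some a_0 and every d < κ^+ more than
    κ indices a had the same trace C_a ∩ [0, d] as C_{a_0}, a transfinite recursion
    would pick distinct a_i (i < κ^+) with C_{a_i} ∩ [0, i] = C_{a_0} ∩ [0, i]; then
    ⋂_i C_{a_i} contains the club C_{a_0} ∩ Δ_i C_{a_i}, so Gal would hold.  Hence every
    a is coded by some d < κ^+, its trace on [0, d] and one of κ indices: λ ≤ 2^κ.

    Applied to κ = ℵ_m for m ≥ n this gives 2^{ℵ_{m+1}} ≤ 2^{ℵ_m}, so every ℵ_k is
    below 2^{ℵ_n} and ℵ_ω ≤ 2^{ℵ_n}.  Equality is excluded by König's theorem, since
    (2^{ℵ_n})^ω = 2^{ℵ_n} while ℵ_ω is a countable union of smaller cardinals. *)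

(** * Comparing cardinalities *)

Lemma inj_into_refl (A : Type) : inj_into A A.
Proof. exists (fun x => x); auto. Qed.

Lemma inj_into_trans (A B C : Type) : inj_into A B -> inj_into B C -> inj_into A C.
Proof. intros [f Hf] [g Hg]; exists (fun x => g (f x)); auto. Qed.

Lemma inj_into_prod (A A' B B' : Type) :
  inj_into A A' -> inj_into B B' -> inj_into (A * B) (A' * B').
Proof.
  intros [f Hf] [g Hg]; exists (fun p => (f (fst p), g (snd p))).
  intros [a b] [c d] E; injection E as E1 E2; f_equal; auto.
Qed.

Lemma inj_into_option (A B : Type) : inj_into A B -> inj_into (option A) (option B).
Proof.
  intros [f Hf]; exists (option_map f).
  intros [a|] [b|] E; try discriminate; auto.
  injection E as E; f_equal; auto.
Qed.

Lemma inj_into_sigma (D B : Type) (F : D -> Type) :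
  (forall d, inj_into (F d) B) -> inj_into {d : D & F d} (D * B).
Proof.
  intros HF.
  assert (e : forall d, {e : F d -> B | forall x y, e x = e y -> x = y}).
  { intro d; apply constructive_indefinite_description, HF. }
  exists (fun s => (projT1 s, proj1_sig (e (projT1 s)) (projT2 s))).
  intros [d x] [d' y] E; injection E as <- E; simpl in E.
  destruct (e d) as [f Hf]; simpl in E; apply Hf in E; subst; reflexivity.
Qed.

Lemma inj_into_sub (T : Type) (P : T -> Prop) : inj_into (sub P) T.
Proof.
  exists (@proj1_sig _ _); intros [x hx] [y hy] E; simpl in E; subst.
  f_equal; apply proof_irrelevance.
Qed.

Lemma inj_into_empty (A B : Type) : ~ inhabited A -> inj_into A B.
Proof.
  intro HA; exists (fun a => False_rect _ (HA (inhabits a))).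
  intros x; exfalso; exact (HA (inhabits x)).
Qed.

Lemma inj_into_of_surj (A B : Type) (f : A -> B) :
  (forall b, exists a, f a = b) -> inj_into B A.
Proof.
  intros Hf; assert (g : forall b, {a | f a = b}).
  { intro b; apply constructive_indefinite_description, Hf. }
  exists (fun b => proj1_sig (g b)); intros x y E.
  rewrite <- (proj2_sig (g x)), <- (proj2_sig (g y)), E; reflexivity.
Qed.

Lemma nat_prod_inj_into_nat : inj_into (nat * nat) nat.
Proof.
  exists Cantor.to_nat; intros x y E.
  rewrite <- (cancel_of_to x), <- (cancel_of_to y), E; reflexivity.
Qed.

Lemma inj_into_powerset (A B : Type) : inj_into A B -> inj_into (A -> Prop) (B -> Prop).
Proof.
  intros [f Hf]; exists (fun S b => exists a, S a /\ f a = b).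
  intros S T E; extensionality a; apply propositional_extensionality.
  assert (Ea := f_equal (fun F => F (f a)) E); simpl in Ea.
  split; intro Ha.
  - assert (Hb : exists a', T a' /\ f a' = f a) by (rewrite <- Ea; eauto).
    destruct Hb as [a' [Ta' Ef]]; apply Hf in Ef; subst; exact Ta'.
  - assert (Hb : exists a', S a' /\ f a' = f a) by (rewrite Ea; eauto).
    destruct Hb as [a' [Sa' Ef]]; apply Hf in Ef; subst; exact Sa'.
Qed.

Lemma inj_into_singleton (T : Type) : inj_into T (T -> Prop).
Proof.
  exists (fun x y => x = y); intros x y E.
  assert (Ey := f_equal (fun F => F y) E); simpl in Ey; rewrite Ey; reflexivity.
Qed.

Lemma cantor (T : Type) : ~ inj_into (T -> Prop) T.
Proof.
  intros [f Hf].
  set (D := fun t => exists S, f S = t /\ ~ S t).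
  destruct (classic (D (f D))) as [HD|HD].
  - destruct HD as [S [E NS]]; apply Hf in E; subst S; exact (NS (ex_intro _ _ (conj eq_refl NS))).
  - apply HD; exists D; split; auto.
Qed.

Lemma powerset_sum (A B : Type) : inj_into ((A -> Prop) * (B -> Prop)) (A + B -> Prop).
Proof.
  exists (fun p o => match o with inl a => fst p a | inr b => snd p b end).
  intros [S1 T1] [S2 T2] E; f_equal; extensionality x.
  - exact (f_equal (fun F => F (inl x)) E).
  - exact (f_equal (fun F => F (inr x)) E).
Qed.

Lemma powerset_curry (A B : Type) : inj_into (A -> B -> Prop) (A * B -> Prop).
Proof.
  exists (fun f p => f (fst p) (snd p)); intros f g E.
  extensionality a; extensionality b; exact (f_equal (fun F => F (a, b)) E).
Qed.

Definition small (P : Type) {L : Type} (F : L -> Prop) : Prop :=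
  exists g : P -> L, forall b, F b -> exists q, g q = b.

Lemma small_range (J P L : Type) (f : J -> L) (dflt : L) :
  inj_into J P -> small P (fun b => exists j, f j = b).
Proof.
  intros [e He].
  exists (fun q => match excluded_middle_informative (exists j, e j = q) with
           | left h => f (proj1_sig (constructive_indefinite_description _ h))
           | right _ => dflt end).
  intros b [j <-]; exists (e j).
  destruct (excluded_middle_informative _) as [h|h]; [|exfalso; eauto].
  destruct (constructive_indefinite_description _ h) as [j' Ej]; simpl.
  apply He in Ej; subst; reflexivity.
Qed.

Section AbsorbingType.

Variable P : Type.
Hypothesis P_square : inj_into (P * P) P.
Hypothesis P_infinite : inj_into nat P.

Lemma option_absorb : inj_into (option P) P.
Proof.
  destruct P_infinite as [i Hi]; eapply inj_into_trans; [|exact P_square].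
  exists (fun o => match o with None => (i 0, i 0) | Some x => (x, i 1) end).
  intros [a|] [b|] E; auto; injection E; intros; subst; auto;
    match goal with H : i _ = i _ |- _ => apply Hi in H; discriminate end.
Qed.

Lemma sum_absorb : inj_into (P + P) P.
Proof.
  destruct P_infinite as [i Hi]; eapply inj_into_trans; [|exact P_square].
  exists (fun o => match o with inl x => (x, i 0) | inr x => (x, i 1) end).
  intros [a|a] [b|b] E; injection E; intros; subst; auto;
    match goal with H : i _ = i _ |- _ => apply Hi in H; discriminate end.
Qed.

Lemma bool_inj_into : inj_into bool P.
Proof.
  eapply inj_into_trans; [|exact P_infinite].
  exists (fun b : bool => if b then 0 else 1); intros [] [] E; auto; discriminate.
Qed.

Lemma powerset_square : inj_into ((P -> Prop) * (P -> Prop)) (P -> Prop).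
Proof.
  eapply inj_into_trans; [apply powerset_sum|].
  apply inj_into_powerset, sum_absorb.
Qed.

Lemma powerset_power_nat : inj_into (nat -> P -> Prop) (P -> Prop).
Proof.
  eapply inj_into_trans; [apply powerset_curry|].
  apply inj_into_powerset; eapply inj_into_trans; [|exact P_square].
  apply inj_into_prod; [exact P_infinite | apply inj_into_refl].
Qed.

End AbsorbingType.

Lemma koenig (Y : Type) (F : nat -> Type) :
  inj_into (nat -> Y) Y -> (forall m, ~ inj_into Y (F m)) -> ~ inj_into Y {m : nat & F m}.
Proof.
  intros [h Hh] Y_large [g Hg].
  set (G := fun phi => g (h phi)).
  assert (HG : forall x y, G x = G y -> x = y) by (intros x y E; apply Hh, Hg, E).
  (* Otherwise Y would inject into F m: some psi_m is not the m-th term of any sequence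
     coded in summand m, and then (psi_m)_m has no code at all. *)
  assert (missed : forall m, exists psi : Y, forall phi a, G phi = existT _ m a -> phi m <> psi).
  { intro m; apply NNPP; intro N; apply (Y_large m).
    assert (hit : forall psi, exists p : (nat -> Y) * F m,
                 G (fst p) = existT _ m (snd p) /\ fst p m = psi).
    { intro psi; apply NNPP; intro N'; apply N; exists psi; intros phi a E1 E2.
      apply N'; exists (phi, a); auto. }
    apply choice in hit; destruct hit as [c Hc].
    exists (fun psi => snd (c psi)); intros x y E.
    destruct (Hc x) as [Ex <-], (Hc y) as [Ey <-].
    rewrite E, <- Ey in Ex; apply HG in Ex; rewrite Ex; reflexivity. }
  apply choice in missed; destruct missed as [psi Hpsi].
  destruct (G psi) as [m a] eqn:E.
  exact (Hpsi m psi a E eq_refl).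
Qed.

Lemma equipotent_range (A B : Type) (f : A -> B) :
  (forall x y, f x = f y -> x = y) -> equipotent (sub (fun b => exists a, f a = b)) A.
Proof.
  intros f_inj.
  exists (fun b : sub (fun b => exists a, f a = b) =>
    proj1_sig (constructive_indefinite_description (fun a => f a = proj1_sig b) (proj2_sig b))).
  split.
  - intros [x hx] [y hy]; simpl.
    destruct (constructive_indefinite_description _ hx) as [i <-],
             (constructive_indefinite_description _ hy) as [j <-]; simpl.
    intros <-; f_equal; apply proof_irrelevance.
  - intro a; exists (exist _ (f a) (ex_intro _ a eq_refl)); simpl.
    destruct (constructive_indefinite_description _ _) as [a' Ea]; simpl; auto.
Qed.

(** * Well-orders *)

Definition trichotomous {T : Type} (lt : T -> T -> Prop) : Prop :=
  forall x y, lt x y \/ x = y \/ lt y x.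

Lemma wf_irrefl (T : Type) (lt : T -> T -> Prop) : well_founded lt -> forall x, ~ lt x x.
Proof.
  intros W x; induction x as [x IH] using (well_founded_ind W).
  intro h; exact (IH x h h).
Qed.

Lemma wf_least (T : Type) (lt : T -> T -> Prop) (Q : T -> Prop) :
  well_founded lt -> (exists x, Q x) -> exists x, Q x /\ forall y, lt y x -> ~ Q y.
Proof.
  intros W [x Qx]; induction x as [x IH] using (well_founded_ind W).
  destruct (classic (exists y, lt y x /\ Q y)) as [[y [lt_yx Qy]]|N].
  - exact (IH y lt_yx Qy).
  - exists x; split; auto; intros y lt_yx Qy; apply N; eauto.
Qed.

Lemma dependent_choice (T : Type) (R : T -> T -> Prop) :
  (forall y, exists z, R y z) ->
  forall x, exists s : nat -> T, s 0 = x /\ forall k, R (s k) (s (S k)).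
Proof.
  intros HR x; apply choice in HR; destruct HR as [next Hnext].
  exists (fix s k := match k with 0 => x | S k => next (s k) end).
  split; [reflexivity | intro k; apply Hnext].
Qed.

(** [R x g v] says that [v] is an admissible value at [x] given the values [g y] for [y < x]. *)
Lemma wf_recursive_choice (T X : Type) (lt : T -> T -> Prop) (dflt : X)
    (R : T -> (T -> X) -> X -> Prop) :
  well_founded lt ->
  (forall x g1 g2, (forall y, lt y x -> g1 y = g2 y) -> forall v, R x g1 v -> R x g2 v) ->
  exists f : T -> X, forall x, (exists v, R x f v) -> R x f (f x).
Proof.
  intros W R_local.
  set (step := fun x (rec : forall y, lt y x -> X) =>
     epsilon (inhabits dflt)
       (fun v => exists g : T -> X, (forall y (h : lt y x), g y = rec y h) /\ R x g v)).
  set (f := Fix W (fun _ => X) step).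
  exists f; intros x [v Hv].
  assert (Ef : f x = step x (fun y _ => f y)).
  { unfold f; rewrite Fix_eq; [reflexivity|].
    intros x0 f1 f2 E; unfold step; f_equal.
    extensionality v0; apply propositional_extensionality.
    split; intros [g [Hg Rg]]; exists g; split; auto; intros y h; rewrite (Hg y h); auto. }
  rewrite Ef; unfold step.
  destruct (epsilon_spec (inhabits dflt)
     (fun v => exists g : T -> X, (forall y (h : lt y x), g y = f y) /\ R x g v))
    as [g [Hg Rg]].
  - exists v, f; auto.
  - apply (R_local x g f); auto.
Qed.

Lemma wellorder_inj_into_or_segment (T B : Type) (lt : T -> T -> Prop) :
  well_founded lt -> trichotomous lt ->
  inj_into T B \/ exists a, inj_into B (sub (fun y => lt y a)).
Proof.
  intros W Tr.
  destruct (classic (inhabited B)) as [[b0]|NB].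
  2:{ destruct (classic (inhabited T)) as [[t]|NT].
      - right; exists t; apply inj_into_empty; auto.
      - left; apply inj_into_empty; auto. }
  (* Enumerate B along T, each time picking a value not yet used. *)
  destruct (wf_recursive_choice T B lt b0 (fun x g v => forall y, lt y x -> g y <> v) W)
    as [f Hf].
  { intros x g1 g2 E v Hv y Hy; rewrite <- E; auto. }
  destruct (classic (forall x, exists v, forall y, lt y x -> f y <> v)) as [fresh|stuck].
  - left; exists f; intros x y E.
    destruct (Tr x y) as [h|[h|h]]; auto; exfalso.
    + exact (Hf y (fresh y) x h E).
    + exact (Hf x (fresh x) y h (eq_sym E)).
  - right; apply not_all_ex_not in stuck; destruct stuck as [a stuck]; exists a.
    apply (inj_into_of_surj _ _ (fun y : sub (fun y => lt y a) => f (proj1_sig y))).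
    intro b; apply NNPP; intro N; apply stuck; exists b; intros y hy E.
    apply N; exists (exist _ y hy); exact E.
Qed.

Definition lex {A B : Type} (R1 : A -> A -> Prop) (R2 : B -> B -> Prop) (p q : A * B) : Prop :=
  R1 (fst p) (fst q) \/ (fst p = fst q /\ R2 (snd p) (snd q)).

Lemma lex_wf (A B : Type) (R1 : A -> A -> Prop) (R2 : B -> B -> Prop) :
  well_founded R1 -> well_founded R2 -> well_founded (lex R1 R2).
Proof.
  intros W1 W2 [a b]; revert b.
  induction a as [a IHa] using (well_founded_ind W1).
  intro b; induction b as [b IHb] using (well_founded_ind W2).
  constructor; intros [a' b'] [h|[E h]]; simpl in *.
  - apply IHa; auto.
  - subst; apply IHb; auto.
Qed.

Lemma lex_trichotomous (A B : Type) (R1 : A -> A -> Prop) (R2 : B -> B -> Prop) :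
  trichotomous R1 -> trichotomous R2 -> trichotomous (lex R1 R2).
Proof.
  intros T1 T2 [a b] [c d]; unfold lex; simpl.
  destruct (T1 a c) as [?|[<-|?]]; auto.
  destruct (T2 b d) as [?|[<-|?]]; auto.
Qed.

Definition le_segment {T : Type} (lt : T -> T -> Prop) (d : T) : Type := sub (fun x => ~ lt d x).

Section StrictWellorder.

Variables (T : Type) (lt : T -> T -> Prop).
Hypothesis lt_wo : strict_wellorder lt.

Let lt_trans : forall x y z, lt x y -> lt y z -> lt x z := proj1 lt_wo.
Let lt_total : trichotomous lt := proj1 (proj2 lt_wo).

Lemma wo_irrefl (x : T) : ~ lt x x.
Proof. exact (wf_irrefl T lt (proj2 (proj2 lt_wo)) x). Qed.

Lemma wo_le_lt_trans (a b c : T) : ~ lt b a -> lt b c -> lt a c.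
Proof. intros h1 h2; destruct (lt_total a b) as [?|[<-|?]]; eauto; contradiction. Qed.

Lemma wo_lt_le_trans (a b c : T) : lt a b -> ~ lt c b -> lt a c.
Proof. intros h1 h2; destruct (lt_total b c) as [?|[<-|?]]; eauto; contradiction. Qed.

Definition wo_max (a b : T) : T := if excluded_middle_informative (lt a b) then b else a.

Lemma wo_max_ge_l (a b : T) : ~ lt (wo_max a b) a.
Proof.
  unfold wo_max; destruct (excluded_middle_informative (lt a b)) as [h|h]; [|apply wo_irrefl].
  intro h'; exact (wo_irrefl _ (lt_trans _ _ _ h h')).
Qed.

Lemma wo_max_ge_r (a b : T) : ~ lt (wo_max a b) b.
Proof.
  unfold wo_max; destruct (excluded_middle_informative (lt a b)); [apply wo_irrefl | auto].
Qed.

Lemma wo_max_lt (a b c : T) : lt a c -> lt b c -> lt (wo_max a b) c.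
Proof. unfold wo_max; destruct (excluded_middle_informative (lt a b)); auto. Qed.

End StrictWellorder.

(** * Clubs on a successor cardinal *)

Section SuccessorCardinal.

Variables (M P : Type) (ltM : M -> M -> Prop).
Hypothesis M_succ : is_successor_initial_ordinal P M ltM.
Hypothesis P_square : inj_into (P * P) P.
Hypothesis P_infinite : inj_into nat P.

Let lt_wo : strict_wellorder ltM := proj1 M_succ.
Let lt_trans : forall x y z, ltM x y -> ltM y z -> ltM x z := proj1 lt_wo.
Let lt_total : trichotomous ltM := proj1 (proj2 lt_wo).
Let lt_wf : well_founded ltM := proj2 (proj2 lt_wo).
Let M_large : ~ inj_into M P := proj1 (proj2 M_succ).
Let segment_small : forall x, inj_into (sub (fun y => ltM y x)) P := proj2 (proj2 M_succ).
Let lt_irrefl := wo_irrefl M ltM lt_wo.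
Let le_lt_trans := wo_le_lt_trans M ltM lt_wo.
Let lt_le_trans := wo_lt_le_trans M ltM lt_wo.

Lemma le_segment_small (d : M) : inj_into (le_segment ltM d) P.
Proof.
  eapply inj_into_trans; [| apply (option_absorb P P_square P_infinite)].
  eapply inj_into_trans; [| apply inj_into_option, (segment_small d)].
  exists (fun y : le_segment ltM d =>
    match excluded_middle_informative (ltM (proj1_sig y) d) with
    | left h => Some (exist _ (proj1_sig y) h) | right _ => None end).
  intros [x hx] [y hy]; simpl.
  destruct (excluded_middle_informative (ltM x d)) as [hxd|hxd],
           (excluded_middle_informative (ltM y d)) as [hyd|hyd]; intro E; try discriminate.
  - injection E as ->; f_equal; apply proof_irrelevance.
  - assert (x = y) as ->.
    { destruct (lt_total x d) as [?|[->|?]]; [contradiction | | contradiction].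
      destruct (lt_total y d) as [?|[->|?]]; solve [reflexivity | contradiction]. }
    f_equal; apply proof_irrelevance.
Qed.

Lemma bounded_family (J : Type) (f : J -> M) : inj_into J P -> exists b, forall j, ltM (f j) b.
Proof.
  (* Otherwise M is the union of the J segments [0, f j], each of size at most P. *)
  intros HJ; apply NNPP; intro unbounded; apply M_large.
  assert (above : forall y, exists j, ~ ltM (f j) y).
  { intro y; apply NNPP; intro N; apply unbounded; exists y; intro j.
    apply NNPP; intro N'; apply N; eauto. }
  apply choice in above; destruct above as [c Hc].
  eapply inj_into_trans with (B := {j : J & le_segment ltM (f j)}).
  { exists (fun y => existT (fun j => le_segment ltM (f j)) (c y) (exist _ y (Hc y))).
    intros x y E; exact (f_equal (fun s => proj1_sig (projT2 s)) E). }
  eapply inj_into_trans; [apply inj_into_sigma; intro j; apply le_segment_small|].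
  eapply inj_into_trans; [apply inj_into_prod; [exact HJ | apply inj_into_refl]|].
  exact P_square.
Qed.

Lemma P_inj_into_M : inj_into P M.
Proof.
  destruct (wellorder_inj_into_or_segment M P ltM lt_wf lt_total) as [H|[a H]]; [contradiction|].
  eapply inj_into_trans; [exact H | apply inj_into_sub].
Qed.

Lemma M_inj_into_powerset : inj_into M (P -> Prop).
Proof.
  destruct (wellorder_inj_into_or_segment M (P -> Prop) ltM lt_wf lt_total) as [H|[a H]]; auto.
  exfalso; apply (cantor P); eapply inj_into_trans; [exact H | apply segment_small].
Qed.

Lemma M_square : inj_into (M * M) M.
Proof.
  (* Goedel's order on pairs (compare maxima first): initial segments lie in squares. *)
  set (key := fun p : M * M => (wo_max M ltM (fst p) (snd p), p)).
  set (R := fun p q => lex ltM (lex ltM ltM) (key p) (key q)).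
  assert (R_wf : well_founded R)
    by exact (wf_inverse_image _ _ _ key (lex_wf _ _ _ _ lt_wf (lex_wf _ _ _ _ lt_wf lt_wf))).
  assert (R_total : trichotomous R).
  { intros p q.
    destruct (lex_trichotomous _ _ _ _ lt_total (lex_trichotomous _ _ _ _ lt_total lt_total)
                (key p) (key q)) as [h|[E|h]]; auto.
    right; left; exact (f_equal snd E). }
  destruct (wellorder_inj_into_or_segment (M * M) M R R_wf R_total) as [H|[z H]]; auto.
  exfalso; apply M_large; eapply inj_into_trans; [exact H|].
  set (m := wo_max M ltM (fst z) (snd z)).
  assert (below : forall w, R w z -> ~ ltM m (fst w) /\ ~ ltM m (snd w)).
  { intros [x y] Hw.
    assert (Hk : ~ ltM m (wo_max M ltM x y)).
    { unfold R, lex, key in Hw; simpl in Hw; destruct Hw as [h|[h _]].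
      - intro h'; exact (lt_irrefl _ (lt_trans _ _ _ h h')).
      - rewrite h; apply lt_irrefl. }
    split; intro h; apply Hk, (lt_le_trans _ _ _ h);
      [apply wo_max_ge_l | apply wo_max_ge_r]; exact lt_wo. }
  eapply inj_into_trans; [| exact P_square].
  eapply inj_into_trans; [| apply inj_into_prod; apply (le_segment_small m)].
  exists (fun w : sub (fun y => R y z) =>
     (exist (fun y => ~ ltM m y) (fst (proj1_sig w)) (proj1 (below _ (proj2_sig w))),
      exist (fun y => ~ ltM m y) (snd (proj1_sig w)) (proj2 (below _ (proj2_sig w))))).
  intros [[a b] h1] [[c d] h2] E; simpl in E; injection E as -> ->.
  f_equal; apply proof_irrelevance.
Qed.

Definition is_sup (s : nat -> M) (b : M) : Prop :=
  (forall k, ltM (s k) b) /\ forall y, ltM y b -> exists k, ~ ltM (s k) y.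

Lemma sup_exists (s : nat -> M) : exists b, is_sup s b.
Proof.
  destruct (bounded_family nat s P_infinite) as [b0 Hb0].
  destruct (wf_least M ltM (fun b => forall k, ltM (s k) b) lt_wf) as [b [Hb least]]; [eauto|].
  exists b; split; auto.
  intros y hy; apply not_all_ex_not, (least y hy).
Qed.

Lemma closed_sup (C : M -> Prop) (s : nat -> M) (b : M) : closed ltM C -> is_sup s b ->
  (forall k, exists z, C z /\ ltM (s k) z /\ ltM z b) -> C b.
Proof.
  intros C_closed [s_below s_cofinal] H; apply C_closed; [exists (s 0); auto|].
  intros y hy; destruct (s_cofinal y hy) as [k hk], (H k) as [z [Cz [h1 h2]]].
  exists z; split; [|split]; auto; exact (le_lt_trans y (s k) z hk h1).
Qed.

Lemma club_inter (J : Type) (Cs : J -> M -> Prop) : inj_into J P ->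
  (forall j, club ltM (Cs j)) -> club ltM (fun x => forall j, Cs j x).
Proof.
  intros HJ Cs_club; split.
  - intros x hx cof j; apply (proj1 (Cs_club j)); auto.
    intros y hy; destruct (cof y hy) as [z [Cz hz]]; exists z; auto.
  - intro x.
    assert (step : forall y, exists z, ltM y z /\ forall j, exists w, Cs j w /\ ltM y w /\ ltM w z).
    { intro y.
      assert (next : forall j, exists w, Cs j w /\ ltM y w) by (intro j; apply (proj2 (Cs_club j))).
      apply choice in next; destruct next as [w Hw].
      destruct (bounded_family (option J) (fun o => match o with None => y | Some j => w j end))
        as [z Hz].
      { eapply inj_into_trans; [apply inj_into_option, HJ | apply option_absorb; auto]. }
      exists z; split; [exact (Hz None)|].
      intro j; exists (w j); destruct (Hw j); split; [|split]; auto; exact (Hz (Some j)). }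
    destruct (dependent_choice M _ step x) as [s [s0 Hs]].
    destruct (sup_exists s) as [b Hb].
    exists b; split; [|rewrite <- s0; apply Hb].
    intro j; apply (closed_sup (Cs j) s b (proj1 (Cs_club j)) Hb).
    intro k; destruct (proj2 (Hs k) j) as [w [Cw [h1 h2]]].
    exists w; split; [|split]; auto; exact (lt_trans _ _ _ h2 (proj1 Hb (S k))).
Qed.

Lemma club_and (C1 C2 : M -> Prop) :
  club ltM C1 -> club ltM C2 -> club ltM (fun x => C1 x /\ C2 x).
Proof.
  intros H1 H2.
  replace (fun x => C1 x /\ C2 x) with (fun x => forall b : bool, (if b then C1 else C2) x).
  - apply club_inter; [apply bool_inj_into; auto | intros []; auto].
  - extensionality x; apply propositional_extensionality.
    split; [intro H; exact (conj (H true) (H false)) | intros [] []; auto].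
Qed.

Lemma club_diag (Cs : M -> M -> Prop) : (forall i, club ltM (Cs i)) ->
  club ltM (fun x => forall i, ltM i x -> Cs i x).
Proof.
  intros Cs_club; split.
  - intros x hx cof i hi; apply (proj1 (Cs_club i)); [exact hx|].
    intros y hy.
    destruct (cof (wo_max M ltM i y) (wo_max_lt M ltM i y x hi hy)) as [z [Dz [h1 h2]]].
    exists z; split; [|split]; auto.
    + apply Dz; exact (le_lt_trans _ _ _ (wo_max_ge_l M ltM lt_wo i y) h1).
    + exact (le_lt_trans _ _ _ (wo_max_ge_r M ltM lt_wo i y) h1).
  - intro x.
    assert (step : forall y, exists z, ltM y z /\ forall i, ltM i y -> Cs i z).
    { intro y.
      destruct (club_inter (sub (fun i => ltM i y)) (fun i => Cs (proj1_sig i)) (segment_small y)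
                 (fun i => Cs_club _)) as [_ unb].
      destruct (unb y) as [z [Hz hyz]]; exists z; split; auto.
      intros i hi; exact (Hz (exist _ i hi)). }
    destruct (dependent_choice M _ step x) as [s [s0 Hs]].
    assert (s_incr : forall k l, k < l -> ltM (s k) (s l)).
    { intros k l hkl; induction hkl as [|l _ IH]; [exact (proj1 (Hs k))|].
      exact (lt_trans _ _ _ IH (proj1 (Hs l))). }
    destruct (sup_exists s) as [b Hb].
    exists b; split; [|rewrite <- s0; apply Hb].
    intros i hi; apply (closed_sup (Cs i) s b (proj1 (Cs_club i)) Hb).
    intro k; destruct (proj2 Hb i hi) as [k' hk'].
    exists (s (S (S (k + k')))); split; [|split; [apply s_incr; lia | apply Hb]].
    apply (proj2 (Hs (S (k + k')))).
    apply (le_lt_trans i (s k') _ hk'), s_incr; lia.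
Qed.

Lemma injective_selection (L : Type) (Q : M -> L -> Prop) (dflt : L) :
  (forall i, ~ small P (Q i)) ->
  exists a : M -> L, (forall i j, a i = a j -> i = j) /\ forall i, Q i (a i).
Proof.
  intros large.
  destruct (wf_recursive_choice M L ltM dflt
              (fun i g v => Q i v /\ forall j, ltM j i -> g j <> v) lt_wf) as [a Ha].
  { intros x g1 g2 E v [Qv fresh]; split; auto; intros j hj; rewrite <- E; auto. }
  assert (Ha' : forall i, Q i (a i) /\ forall j, ltM j i -> a j <> a i).
  { intro i; apply Ha; apply NNPP; intro N; apply (large i).
    destruct (small_range (sub (fun j => ltM j i)) P L (fun j => a (proj1_sig j)) dflt
                (segment_small i)) as [g Hg].
    exists g; intros b Qb; apply Hg; apply NNPP; intro N'; apply N; exists b; split; auto.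
    intros j hj E; apply N'; exists (exist _ j hj); exact E. }
  exists a; split; [|intro i; apply Ha'].
  intros i j E; destruct (lt_total i j) as [h|[h|h]]; auto; exfalso.
  - exact (proj2 (Ha' j) i h E).
  - exact (proj2 (Ha' i) j h (eq_sym E)).
Qed.

Section Traces.

Variables (L : Type) (C : L -> M -> Prop).

Definition trace (d : M) (a : L) : le_segment ltM d -> Prop := fun x => C a (proj1_sig x).

Lemma inj_into_powerset_of_small_fibers :
  (forall a0, exists d, small P (fun b => trace d b = trace d a0)) -> inj_into L (P -> Prop).
Proof.
  intros fibers.
  destruct (classic (inhabited L)) as [[dflt]|empty]; [|apply inj_into_empty; exact empty].
  (* [enum d s] enumerates the fibre of [s] and depends on nothing else, so [a] is
     determined by [d], [trace d a] and its position in [enum d (trace d a)]. *)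
  set (enum := fun d s => epsilon (inhabits (fun _ : P => dflt))
                            (fun g => forall b, trace d b = s -> exists q, g q = b)).
  assert (code : forall a, exists dq : M * P, enum (fst dq) (trace (fst dq) a) (snd dq) = a).
  { intro a; destruct (fibers a) as [d Hd].
    destruct (epsilon_spec (inhabits (fun _ : P => dflt))
                (fun g => forall b, trace d b = trace d a -> exists q, g q = b) Hd a eq_refl)
      as [q Hq].
    exists (d, q); exact Hq. }
  apply choice in code; destruct code as [dq Hdq].
  eapply inj_into_trans with (B := (P * {d : M & le_segment ltM d -> Prop})%type).
  - exists (fun a => (snd (dq a), existT (fun d => le_segment ltM d -> Prop)
                                         (fst (dq a)) (trace (fst (dq a)) a))).
    intros a b E; rewrite <- (Hdq a), <- (Hdq b).
    destruct (dq a) as [d q], (dq b) as [d' q']; simpl in *.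
    injection E as <- <- Es.
    apply inj_pair2 in Es; rewrite Es; reflexivity.
  - eapply inj_into_trans; [apply inj_into_prod; [apply inj_into_singleton |
      apply inj_into_sigma; intro d; apply inj_into_powerset, le_segment_small]|].
    eapply inj_into_trans; [apply inj_into_prod; [apply inj_into_refl |
      apply inj_into_prod; [apply M_inj_into_powerset | apply inj_into_refl]]|].
    eapply inj_into_trans;
      [apply inj_into_prod; [apply inj_into_refl | apply powerset_square; auto]|].
    apply powerset_square; auto.
Qed.

Hypothesis C_club : forall a, club ltM (C a).

Lemma Cub_inter_of_agreeing_traces (a0 : L) (a : M -> L) :
  (forall i, trace i (a i) = trace i a0) -> in_Cub ltM (fun x => forall i, C (a i) x).
Proof.
  intros agree.
  exists (fun x => C a0 x /\ forall i, ltM i x -> C (a i) x); split.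
  - apply club_and; [apply C_club | apply club_diag; intro i; apply C_club].
  - intros x [C0x diag] i; destruct (classic (ltM i x)) as [h|h]; [exact (diag i h)|].
    exact (eq_ind _ (fun t => t (exist _ x h)) C0x _ (eq_sym (agree i))).
Qed.

End Traces.

Lemma inj_into_powerset_of_not_Gal (L : Type) :
  ~ Gal (in_Cub ltM) L -> inj_into L (P -> Prop).
Proof.
  intros notGal; apply not_all_ex_not in notGal; destruct notGal as [A notGal].
  apply imply_to_and in notGal; destruct notGal as [A_Cub no_subfamily].
  destruct (choice _ A_Cub) as [C HC].
  apply (inj_into_powerset_of_small_fibers L C).
  intro a0; apply NNPP; intro large.
  destruct (injective_selection L (fun i b => trace L C i b = trace L C i a0) a0)
    as [a [a_inj agree]].
  { intros i N; apply large; exists i; exact N. }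
  apply no_subfamily; exists (fun b => exists i, a i = b).
  split; [exact (equipotent_range M L a a_inj)|].
  destruct (Cub_inter_of_agreeing_traces L C (fun b => proj1 (HC b)) a0 a agree)
    as [D [D_club D_sub]].
  exists D; split; auto.
  intros x Dx b [i <-]; exact (proj2 (HC (a i)) x (D_sub x Dx i)).
Qed.

End SuccessorCardinal.

(** * The alephs *)

Section AlephFamily.

Variables (Aleph : nat -> Type) (lt : forall m, Aleph m -> Aleph m -> Prop).
Hypothesis aleph : aleph_family Aleph lt.

Lemma aleph_absorbing (p : nat) : inj_into (Aleph p * Aleph p) (Aleph p) /\ inj_into nat (Aleph p).
Proof.
  destruct aleph as [[f [f_inj f_surj]] succ].
  induction p as [|p [square infinite]].
  - assert (to_nat : inj_into (Aleph 0) nat) by (exists f; exact f_inj).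
    assert (of_nat : inj_into nat (Aleph 0)) by exact (inj_into_of_surj _ _ f f_surj).
    split; [|exact of_nat].
    eapply inj_into_trans; [apply inj_into_prod; exact to_nat|].
    eapply inj_into_trans; [exact nat_prod_inj_into_nat | exact of_nat].
  - split; [exact (M_square _ _ _ (succ p) square infinite)|].
    eapply inj_into_trans; [exact infinite | exact (P_inj_into_M _ _ _ (succ p))].
Qed.

Lemma aleph_mono (k l : nat) : k <= l -> inj_into (Aleph k) (Aleph l).
Proof.
  induction 1 as [|l _ IH]; [apply inj_into_refl|].
  eapply inj_into_trans; [exact IH | exact (P_inj_into_M _ _ _ (proj2 aleph l))].
Qed.

Lemma aleph_powerset_collapse (p : nat) :
  ~ Gal (in_Cub (lt (S p))) (Aleph (S p) -> Prop) ->
  inj_into (Aleph (S p) -> Prop) (Aleph p -> Prop).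
Proof.
  destruct (aleph_absorbing p) as [square infinite].
  exact (inj_into_powerset_of_not_Gal _ _ _ (proj2 aleph p) square infinite _).
Qed.

End AlephFamily.

Theorem proposition4p14 :
  forall (Aleph : nat -> Type) (lt : forall m, Aleph m -> Aleph m -> Prop),
    aleph_family Aleph lt ->
    forall n : nat, 1 <= n ->
      (forall m : nat, n <= m ->
         ~ Gal (in_Cub (lt m)) (Aleph m -> Prop)) ->
      inj_into {m : nat & Aleph m} (Aleph n -> Prop) /\
      ~ inj_into (Aleph n -> Prop) {m : nat & Aleph m}.
Proof.
  intros Aleph lt aleph n _ notGal.
  destruct (aleph_absorbing Aleph lt aleph n) as [n_square n_infinite].
  assert (collapse : forall m, n <= m -> inj_into (Aleph m -> Prop) (Aleph n -> Prop)).
  { induction 1 as [|m le_nm IH]; [apply inj_into_refl|].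
    eapply inj_into_trans; [apply (aleph_powerset_collapse Aleph lt aleph m) | exact IH].
    apply notGal; lia. }
  assert (below : forall k, inj_into (Aleph k) (Aleph n -> Prop)).
  { intro k; eapply inj_into_trans; [apply (aleph_mono Aleph lt aleph k (k + n)); lia|].
    eapply inj_into_trans; [apply inj_into_singleton | apply collapse; lia]. }
  split.
  - eapply inj_into_trans; [apply inj_into_sigma, below|].
    eapply inj_into_trans; [apply inj_into_prod; [|apply inj_into_refl]|].
    + eapply inj_into_trans; [exact n_infinite | apply inj_into_singleton].
    + exact (powerset_square _ n_square n_infinite).
  - apply koenig; [exact (powerset_power_nat _ n_square n_infinite)|].
    intros m above; apply (proj1 (proj2 (proj2 aleph m))).
    eapply inj_into_trans; [apply below | exact above].
Qed.
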